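(* Let $H$ be a finite graph with at least two connected components, and let its vertices be numbered $1,\dots,n$ in the order in which they appear in the canonical adjacency matrix of $H$. Let $A$ be the component containing vertex $1$. Then the vertices of $A$ are exactly $1,2,\dots,|A|$, i.e. all vertices of $A$ appear before all other vertices.
   Context: For an $n\times n$ adjacency matrix $\mathbf{M}$ of a finite simple graph (with respect to some ordering of its vertices), its bit-string is obtained by concatenating the entries strictly above the diagonal column by column, left to right, reading each column from top to bottom. The canonical adjacency matrix of a graph $G$ is the unique adjacency matrix of $G$ (over all orderings of its vertices) whose bit-string is lexicographically greatest. *)

From mathcomp Require Import all_boot all_order all_algebra all_fingroup.
Set Implicit Arguments. Unset Strict Implicit. Unset Printing Implicit Defensive.

Definition simple_graph n (e : rel 'I_n) : Prop := symmetric e /\ irreflexive e.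

(* Adjacency matrix w.r.t. the vertex ordering s: position k holds vertex s k. *)
Definition adj_mx n (e : rel 'I_n) (s : {perm 'I_n}) : 'M[bool]_n :=
  \matrix_(i, j) e (s i) (s j).

Definition bitstring n (M : 'M[bool]_n) : seq bool :=
  flatten [seq [seq M i j | i : 'I_n <- enum 'I_n & (nat_of_ord i < nat_of_ord j)%N] | j : 'I_n <- enum 'I_n].

Fixpoint lex_le (s t : seq bool) : bool :=
  match s, t with
  | [::], _ => true
  | _ :: _, [::] => false
  | a :: s', b :: t' => (~~ a && b) || ((a == b) && lex_le s' t')
  end.

Definition canonical_adj_mx n (e : rel 'I_n) (M : 'M[bool]_n) : Prop :=
  (exists s : {perm 'I_n}, M = adj_mx e s) /\
  (forall s : {perm 'I_n}, lex_le (bitstring (adj_mx e s)) (bitstring M)).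

From mathcomp Require Import all_boot all_order all_algebra all_fingroup.
Set Implicit Arguments. Unset Strict Implicit. Unset Printing Implicit Defensive.

(* The heart of the argument is an exchange lemma: if some vertex in a
   position p < j is adjacent to a vertex in a position q > j, while no vertex
   in a position before j is adjacent to the vertex in position j, then
   swapping positions j and q leaves the columns before j unchanged and puts a
   1 above the diagonal of column j, where there was only 0s; so the
   bit-string strictly increases.  Hence in a canonical ordering column j
   always has a 1 above the diagonal as soon as the vertices before j have a
   neighbour after j (Lemma [canonical_column_nonzero]).

   Strong induction on positions then shows that the set of positions of A is
   downward closed: every path from the vertex in position 0 to a later vertex
   of A leaves the prefix of positions below m through an edge, and the
   exchange lemma forces the vertex in position m to be adjacent to the
   prefix.  Finally a downward closed set of positions is an initial segment
   of length equal to its cardinality. *)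

Lemma card_ord_lt n k : k <= n -> #|[pred m : 'I_n | m < k]| = k.
Proof.
move=> le_kn; rewrite cardE /enum_mem size_filter -enumT.
have -> : count [pred m : 'I_n | m < k] (enum 'I_n)
        = count (fun x => x < k) (iota 0 n) by rewrite -val_enum_ord count_map.
rewrite -(subnKC le_kn) iotaD count_cat add0n.
rewrite (@eq_in_count _ _ predT) ?count_predT ?size_iota; last first.
  by move=> x; rewrite mem_iota.
rewrite (@eq_in_count _ _ pred0) ?count_pred0 ?addn0 // => x.
by rewrite mem_iota /= => /andP[le_kx _]; rewrite ltnNge le_kx.
Qed.

Lemma downward_closed_card n (D : {set 'I_n}) :
  (forall a b : 'I_n, a < b -> b \in D -> a \in D) ->
  forall k : 'I_n, (k \in D) = (k < #|D|).
Proof.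
move=> downD k; apply/idP/idP => [kD | ltkD].
  have sub_le : [pred m : 'I_n | m < k.+1] \subset D.
    apply/subsetP => m; rewrite inE /= ltnS leq_eqVlt => /orP[/eqP eq_mk | lt_mk].
      by rewrite (val_inj eq_mk).
    exact: downD lt_mk kD.
  by have := subset_leq_card sub_le; rewrite card_ord_lt.
apply: contraTT ltkD => kND; rewrite -leqNgt.
have sub_lt : D \subset [pred m : 'I_n | m < k].
  apply/subsetP => m mD; rewrite inE /= ltnNge leq_eqVlt negb_or.
  apply/andP; split; first by apply: contra kND => /eqP/val_inj ->.
  by apply: contra kND => lt_km; exact: downD lt_km mD.
by have := subset_leq_card sub_lt; rewrite card_ord_lt // ltnW.
Qed.

Lemma connect_cross (T : finType) (e : rel T) (P : pred T) x y :
  connect e x y -> P x -> ~~ P y ->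
  exists u v, [/\ connect e x u, e u v, P u & ~~ P v].
Proof.
case/connectP=> p; elim: p x => [|z p IHp] x /= => [_ -> -> // | /andP[exz pz] yl Px Py].
case Pz: (P z); last by exists x, z; rewrite Pz.
have [u [v [czu euv Pu Pv]]] := IHp z pz yl Pz Py.
by exists u, v; split=> //; apply: connect_trans (connect1 exz) czu.
Qed.

Lemma lex_le_cat2l u x y : lex_le (u ++ x) (u ++ y) = lex_le x y.
Proof. by elim: u => //= a u ->; case: a. Qed.

Lemma lex_le_zero_block cN cM x y :
  size cN = size cM -> all (fun b => b == false) cM -> has id cN ->
  lex_le (cN ++ x) (cM ++ y) = false.
Proof.
elim: cM cN => [|b cM IHcM] [|a cN] //= [eq_sz] /andP[/eqP -> zM].
by case: a => //= hasN; rewrite IHcM.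
Qed.

Lemma lex_le_columns n (M N : 'M[bool]_n) (j : 'I_n) (r : seq 'I_n) :
  sorted (fun a b : 'I_n => a < b) r -> j \in r ->
  (forall a b : 'I_n, a < b -> b < j -> N a b = M a b) ->
  (forall a : 'I_n, a < j -> M a j = false) ->
  (exists2 a : 'I_n, a < j & N a j) ->
  lex_le (flatten [seq [seq N i c | i : 'I_n <- enum 'I_n & i < c] | c <- r])
         (flatten [seq [seq M i c | i : 'I_n <- enum 'I_n & i < c] | c <- r])
  = false.
Proof.
move=> + + eqNM zeroM [a lt_aj Naj].
elim: r => [|c r IHr] //= sorted_r.
case: (eqVneq c j) => [-> _ | neq_cj].
  apply: lex_le_zero_block; first by rewrite !size_map.
    by apply/allP => z /mapP[i]; rewrite mem_filter => /andP[lt_ij _] ->; rewrite zeroM.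
  by apply/hasP; exists (N a j) => //; apply: map_f; rewrite mem_filter lt_aj mem_enum.
rewrite in_cons eq_sym (negbTE neq_cj) /= => j_r.
have lt_trans : transitive (fun a b : 'I_n => a < b) by move=> ? ? ?; apply: ltn_trans.
have lt_cj : c < j by move/allP: (order_path_min lt_trans sorted_r); apply.
have -> : [seq N i c | i : 'I_n <- enum 'I_n & i < c]
        = [seq M i c | i : 'I_n <- enum 'I_n & i < c].
  by apply/eq_in_map => i; rewrite mem_filter => /andP[lt_ic _]; rewrite eqNM.
by rewrite lex_le_cat2l; apply: IHr (path_sorted sorted_r) j_r.
Qed.

Lemma bitstring_gt n (M N : 'M[bool]_n) (j : 'I_n) :
  (forall a b : 'I_n, a < b -> b < j -> N a b = M a b) ->
  (forall a : 'I_n, a < j -> M a j = false) ->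
  (exists2 a : 'I_n, a < j & N a j) ->
  lex_le (bitstring N) (bitstring M) = false.
Proof.
apply: lex_le_columns; last by rewrite mem_enum.
by rewrite -(@sorted_map _ _ val ltn) val_enum_ord iota_ltn_sorted.
Qed.

Lemma canonical_column_nonzero n (e : rel 'I_n) (s : {perm 'I_n}) (p j q : 'I_n) :
  canonical_adj_mx e (adj_mx e s) ->
  p < j -> j < q -> e (s p) (s q) ->
  [exists a : 'I_n, (a < j) && e (s a) (s j)].
Proof.
move=> [_ canon] lt_pj lt_jq epq; apply/contraT; rewrite negb_exists => /forallP none.
pose t := tperm j q.
have t_fix (a : 'I_n) : a < j -> t a = a.
  move=> lt_aj; apply: tpermD.
    by apply: contraTneq lt_aj => ->; rewrite ltnn.
  by apply: contraTneq lt_aj => <-; rewrite -leqNgt ltnW.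
have := canon (t * s)%g; rewrite (@bitstring_gt n (adj_mx e s) _ j) //.
- by move=> a b lt_ab lt_bj; rewrite !mxE !permM !t_fix // (ltn_trans lt_ab lt_bj).
- by move=> a lt_aj; rewrite mxE; apply/negbTE; have := none a; rewrite lt_aj.
- by exists p => //; rewrite mxE !permM t_fix // tpermL.
Qed.

Lemma canonical_component_downward n (e : rel 'I_n) (s : {perm 'I_n}) (i0 : 'I_n) :
  canonical_adj_mx e (adj_mx e s) -> nat_of_ord i0 = 0 ->
  forall m k : 'I_n, m < k -> connect e (s i0) (s k) -> connect e (s i0) (s m).
Proof.
move=> canon i0_0 m; have [N] := ubnP (val m); elim: N m => // N IHN m /ltnSE le_mN k lt_mk conn_k.
have prefix (a : 'I_n) : a < m -> connect e (s i0) (s a).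
  by move=> lt_am; apply: IHN (leq_trans lt_am le_mN) k (ltn_trans lt_am lt_mk) conn_k.
have [m_0 | m_pos] := posnP m.
  by rewrite (_ : m = i0) ?connect0 //; apply: val_inj; rewrite /= m_0 i0_0.
have [u [v [conn_u euv Pu Pv]]] : exists u v,
    [/\ connect e (s i0) u, e u v, (s^-1)%g u < m & ~~ ((s^-1)%g v < m)].
  by apply: connect_cross conn_k _ _; rewrite !permK ?i0_0 // -leqNgt ltnW.
have conn_v : connect e (s i0) v := connect_trans conn_u (connect1 euv).
move: Pv; rewrite -leqNgt leq_eqVlt => /orP[/eqP/val_inj eq_mv | lt_mv].
  by rewrite eq_mv permKV.
have := canonical_column_nonzero canon Pu lt_mv; rewrite !permKV => /(_ euv).
case/existsP=> a /andP[lt_am eam].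
exact: connect_trans (prefix a lt_am) (connect1 eam).
Qed.

Theorem mainTheorem8 (n : nat) (e : rel 'I_n) (s : {perm 'I_n}) :
  simple_graph e ->
  (* H has at least two connected components *)
  (exists u v : 'I_n, ~~ connect e u v) ->
  (* s numbers the vertices as they appear in the canonical adjacency matrix *)
  canonical_adj_mx e (adj_mx e s) ->
  forall i0 : 'I_n, nat_of_ord i0 = 0%N ->
  forall k : 'I_n,
    (s k \in [set v | connect e (s i0) v]) =
    (k < #|[set v | connect e (s i0) v]|)%N.
Proof.
move=> _ _ canon i0 i0_0 k.
set A := [set v | connect e (s i0) v].
have -> : (s k \in A) = (k \in s @^-1: A) by rewrite !inE.
rewrite -(card_preimset A (@perm_inj _ s)).
apply: downward_closed_card => m {}k lt_mk; rewrite !inE.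
exact: (canonical_component_downward canon i0_0 lt_mk).
Qed.
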